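(* Let $\ell\ge1$, $N=2^\ell$, $n_c,n_v\ge1$, and let ${\mathbf x}_{h,u}\in\mathbb{F}_2^\ell$ for $h\in\{0,\dots,n_c-1\}$, $u\in\{0,\dots,n_v-1\}$. Let $H$ be the $n_cN\times n_vN$ block matrix whose $(h,u)$ block is $P_{{\mathbf x}_{h,u}}$. For $0\le h<i\le n_c-1$ and ${\boldsymbol\alpha}\in\mathbb{F}_2^\ell$, let $\rho_{h,i}({\boldsymbol\alpha})=|\{u\in\{0,\dots,n_v-1\}: {\mathbf x}_{h,u}+{\mathbf x}_{i,u}={\boldsymbol\alpha}\}|$ (the multiplicity of ${\boldsymbol\alpha}$ in the multiset $A_{h,i}=\{{\mathbf x}_{h,u}+{\mathbf x}_{i,u}: u\}$). Then the number of $4$-cycles in the Tanner graph of $H$ is $$\mathcal{N}_4=2^\ell\sum_{0\le h<i\le n_c-1}\ \sum_{{\boldsymbol\alpha}\in\mathbb{F}_2^\ell}\binom{\rho_{h,i}({\boldsymbol\alpha})}{2}.$$ Consequently, the Tanner graph of $H$ has girth greater than $4$ if and only if, for every $h<i$, the elements ${\mathbf x}_{h,u}+{\mathbf x}_{i,u}$, $u=0,\dots,n_v-1$, are pairwise distinct.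
   Context: Rows and columns of $N\times N$ binary matrices are indexed by $\mathbb{F}_2^\ell$ via ${\mathbf x}=(x_1,\dots,x_\ell)\leftrightarrow 1+\sum_i x_i2^{i-1}$. For ${\mathbf a}\in\mathbb{F}_2^\ell$, $P_{\mathbf a}$ is the $N\times N$ binary matrix with $(P_{\mathbf a})_{{\mathbf x},{\mathbf y}}=1$ iff ${\mathbf y}={\mathbf x}+{\mathbf a}$ (dyadic permutation matrix). The Tanner graph of a binary matrix is the bipartite graph with check nodes = rows, variable nodes = columns, and edges at the $1$-entries. A $k$-cycle is a closed walk of $k$ edges with distinct vertices and edges; the girth is the length of a shortest cycle. *)

From HB Require Import structures.
From mathcomp Require Import all_boot all_order all_algebra.
Set Implicit Arguments. Unset Strict Implicit. Unset Printing Implicit Defensive.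
Import GRing.Theory.
Local Open Scope ring_scope.

Definition dyadic_perm (l : nat) (a : 'rV['F_2]_l) (x y : 'rV['F_2]_l) : bool :=
  y == x + a.

(* The block matrix H whose (h,u) block is P_{X h u}; rows indexed by
   (block row h, position x in F_2^l), columns by (block column u, position y). *)
Definition block_dyadic (l nc nv : nat) (X : 'I_nc -> 'I_nv -> 'rV['F_2]_l)
  (r : 'I_nc * 'rV['F_2]_l) (c : 'I_nv * 'rV['F_2]_l) : bool :=
  dyadic_perm (X r.1 c.1) r.2 c.2.

(* Tanner graph of a binary matrix with row index set R and column index set C:
   vertices are check nodes (inl r) and variable nodes (inr c). *)
Definition tanner_adj (R C : finType) (H : R -> C -> bool) : rel (R + C)%type :=
  fun a b => match a, b with
             | inl r, inr c => H r c
             | inr c, inl r => H r c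
             | _, _ => false
             end.

Section Cycles.
Variable T : finType.
Variable e : rel T.

Definition cyc_edge (k : nat) (w : {ffun 'I_k -> T}) (i : 'I_k) : {set T} :=
  [set w i; w (ordS i)].

Definition is_cycle (k : nat) (w : {ffun 'I_k -> T}) : bool :=
  [&& (0 < k)%N, injectiveb w, injectiveb (cyc_edge w)
    & [forall i, e (w i) (w (ordS i))]].

Definition cycle_edges (k : nat) (w : {ffun 'I_k -> T}) : {set {set T}} :=
  [set cyc_edge w i | i : 'I_k].

(* number of k-cycles (distinct cycles as subgraphs) *)
Definition num_cycles (k : nat) : nat :=
  #|[set cycle_edges w | w in [pred w : {ffun 'I_k -> T} | is_cycle w]]|.

(* girth > g : every cycle has length > g (vacuous if acyclic: girth = infinity) *)
Definition girth_gt (g : nat) : Prop :=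
  forall k (w : {ffun 'I_k -> T}), is_cycle w -> (g < k)%N.
End Cycles.

Definition rho (l nc nv : nat) (X : 'I_nc -> 'I_nv -> 'rV['F_2]_l)
  (h i : 'I_nc) (alpha : 'rV['F_2]_l) : nat :=
  #|[set u : 'I_nv | (X h u + X i u == alpha)%R]|.

From HB Require Import structures.
From mathcomp Require Import all_boot all_order all_algebra zify.
Import GRing.Theory.
Set Implicit Arguments. Unset Strict Implicit.

(* A 4-cycle of a Tanner graph is a rectangle: two distinct rows and two distinct
   columns of the matrix meeting in four 1-entries.  In the block-dyadic matrix a
   rectangle on block rows h <> i and block columns u <> v is determined by the
   position x in F_2^l of one of its rows: the other three vertices are forced by
   the permutation structure, and the rectangle closes up exactly when
   x_{h,u} + x_{i,u} = x_{h,v} + x_{i,v}.  Hence N_4 is 2^l times the number of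
   such coincidences, which are counted by the sum of binomials C(rho, 2).  Being
   bipartite and without repeated edges, a Tanner graph has no cycle shorter than
   4, so its girth exceeds 4 exactly when there are no coincidences at all. *)

Lemma set2_lt_inj (T : finType) (f : T -> nat) (a b a' b' : T) :
  [set a; b] = [set a'; b'] -> f a < f b -> f a' < f b' -> a = a' /\ b = b'.
Proof.
move=> /setP E ab ab'; have /esym := E a; have /esym := E b; rewrite !inE !eqxx ?orbT /=.
case/orP=> /eqP b_eq; case/orP=> /eqP a_eq; subst => //.
- by rewrite ltnn in ab.
- by have := ltn_trans ab ab'; rewrite ltnn.
- by rewrite ltnn in ab.
Qed.

Lemma card_ltn_pairs n (A : {set 'I_n}) :
  #|[set uv : 'I_n * 'I_n | [&& uv.1 \in A, uv.2 \in A & uv.1 < uv.2]]| = 'C(#|A|, 2).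
Proof.
rewrite -cards_draws -(@card_in_imset _ _ (fun uv : 'I_n * 'I_n => [set uv.1; uv.2])).
  apply: eq_card => B; rewrite inE.
  apply/imsetP/andP => [[[u v]] | [sBA /cards2P[u [v [uv B_uv]]]]].
    rewrite inE /= => /and3P[uA vA lt_uv] ->; rewrite cards2 (_ : (u == v) = false).
      by split => //; apply/subsetP => w; rewrite !inE => /orP[] /eqP ->.
    exact: ltn_eqF.
  have [uA vA] : u \in A /\ v \in A by split; apply: (subsetP sBA); rewrite B_uv !inE eqxx ?orbT.
  case: (ltngtP u v) => [lt_uv | lt_vu | /val_inj eq_uv]; last by rewrite eq_uv eqxx in uv.
    by exists (u, v); rewrite // inE /= uA vA lt_uv.
  by exists (v, u); rewrite // ?inE /= ?uA ?vA ?lt_vu // B_uv setUC.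
move=> [u v] [u' v']; rewrite !inE /= => /and3P[_ _ lt] /and3P[_ _ lt'] E.
by case: (set2_lt_inj (f := @nat_of_ord n) E lt lt') => -> ->.
Qed.

Definition collisions n (T : eqType) (f : 'I_n -> T) : {set 'I_n * 'I_n} :=
  [set uv : 'I_n * 'I_n | (uv.1 < uv.2) && (f uv.1 == f uv.2)].

Lemma card_collisions n (T : finType) (f : 'I_n -> T) :
  #|collisions f| = \sum_(a : T) 'C(#|[set u | f u == a]|, 2).
Proof.
rewrite -sum1_card (partition_big (fun uv => f uv.1) xpredT) //=.
apply: eq_bigr => a _; rewrite -card_ltn_pairs -sum1_card.
apply: eq_bigl => -[u v]; rewrite !inE /=.
by case: (eqVneq (f u) a) => [<- | _]; rewrite ?andbT ?andbF // andbC eq_sym.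
Qed.

Lemma collisions_eq0 n (T : eqType) (f : 'I_n -> T) : collisions f = set0 <-> injective f.
Proof.
split => [no_coll u v fuv | f_inj]; last first.
  apply/setP => -[u v]; rewrite !inE /=; apply/negP => /andP[lt /eqP/f_inj uv].
  by rewrite uv ltnn in lt.
case: (ltngtP u v) => [lt | lt | /val_inj //].
  by have := in_set0 (u, v); rewrite -no_coll inE /= lt fuv eqxx.
by have := in_set0 (v, u); rewrite -no_coll inE /= lt fuv eqxx.
Qed.

Section Cycles.
Variables (T : finType) (e : rel T).

Lemma ordSS_neq k (i : 'I_k) : 2 < k -> ordS (ordS i) != i.
Proof.
case: i => i ik k_gt2; apply/eqP => /(congr1 val) /=.
rewrite (_ : (i.+1 %% k).+1 %% k = i.+2 %% k); last by rewrite -[(_ %% k).+1]addn1 modnDml addn1.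
have [k_le | k_gt] := leqP k i.+2; last by rewrite modn_small //; lia.
by rewrite -(subnK k_le) modnDr modn_small; lia.
Qed.

Lemma cyc_edge_inj k (w : {ffun 'I_k -> T}) :
  2 < k -> injective w -> injective (cyc_edge w).
Proof.
move=> k_gt2 w_inj i j /setP Eij.
have := Eij (w i); rewrite !inE eqxx /= => /esym/orP[/eqP/w_inj // | /eqP/w_inj i_Sj].
have := Eij (w (ordS i)); rewrite !inE eqxx orbT => /esym/orP[/eqP/w_inj Si_j | /eqP/w_inj].
  by have := ordSS_neq j k_gt2; rewrite -i_Sj Si_j eqxx.
exact: ordS_inj.
Qed.

Lemma is_cycleE k (w : {ffun 'I_k -> T}) : 2 < k ->
  is_cycle e w = injectiveb w && [forall i, e (w i) (w (ordS i))].
Proof.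
move=> k_gt2; rewrite /is_cycle (ltn_trans _ k_gt2) //=.
by case: injectiveP => //= /(cyc_edge_inj k_gt2) /injectiveP ->.
Qed.

Definition cycle_subgraphs k : {set {set {set T}}} :=
  [set cycle_edges w | w in [pred w : {ffun 'I_k -> T} | is_cycle e w]].

Definition cycle4 (a b c d : T) : {ffun 'I_4 -> T} :=
  [ffun i : 'I_4 => nth a [:: a; b; c; d] i].

Lemma cycle4_surj (w : {ffun 'I_4 -> T}) : exists a b c d, w = cycle4 a b c d.
Proof.
exists (w ord0), (w (@Ordinal 4 1 isT)), (w (@Ordinal 4 2 isT)), (w (@Ordinal 4 3 isT)).
by apply/ffunP => -[[|[|[|[|m]]]] Hm]; rewrite ffunE //=; congr (w _); apply: val_inj.
Qed.

Lemma is_cycle4 a b c d :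
  is_cycle e (cycle4 a b c d) = uniq [:: a; b; c; d] && [&& e a b, e b c, e c d & e d a].
Proof.
rewrite is_cycleE //; congr (_ && _).
  by rewrite /injectiveb /dinjectiveb enumT unlock /= /ord_enum /= !insubT /= !ffunE.
apply/forallP/and4P => [E | [eab ebc ecd eda] [[|[|[|[|m]]]] Hm] //]; rewrite ?ffunE //.
by split; [move: (E ord0) | move: (E (@Ordinal 4 1 isT)) | move: (E (@Ordinal 4 2 isT))
          | move: (E (@Ordinal 4 3 isT))]; rewrite !ffunE.
Qed.

Definition quad_edges (a b c d : T) : {set {set T}} :=
  [set [set a; b]; [set b; c]; [set c; d]; [set d; a]].

Lemma cycle_edges4 a b c d : cycle_edges (cycle4 a b c d) = quad_edges a b c d.
Proof.
apply/setP => s; rewrite !inE; apply/imsetP/idP => [[[[|[|[|[|m]]]] Hm] _ ->] |].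
all: rewrite /cyc_edge ?ffunE /= ?eqxx ?orbT //.
move=> /orP[/orP[/orP[] | ] | ] /eqP ->;
  [exists ord0 | exists (@Ordinal 4 1 isT) | exists (@Ordinal 4 2 isT) | exists (@Ordinal 4 3 isT)];
  by rewrite // /cyc_edge !ffunE.
Qed.

Lemma quad_edges_rot a b c d : quad_edges a b c d = quad_edges b c d a.
Proof. by apply/setP => s; rewrite !inE; do !case: (_ == _). Qed.

Lemma quad_edges_rev a b c d : quad_edges a b c d = quad_edges c b a d.
Proof.
apply/setP => s; rewrite !inE (setUC [set c] [set b]) (setUC [set b] [set a]).
rewrite (setUC [set a] [set d]) (setUC [set d] [set c]).
by do !case: (_ == _).
Qed.

End Cycles.

Section TannerGraph.
Variables (R C : finType) (H : R -> C -> bool).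
Local Notation e := (tanner_adj H).

Definition is_row (a : R + C) : bool := if a is inl _ then true else false.

Lemma tanner_adj_row (a b : R + C) : e a b -> is_row b = ~~ is_row a.
Proof. by case: a => ?; case: b. Qed.

Lemma tanner_cycle_gt3 k (w : {ffun 'I_k -> R + C}) : is_cycle e w -> 3 < k.
Proof.
case/and4P => k_gt0 _ /injectiveP edge_inj /forallP w_adj.
have alt i : is_row (w (ordS i)) = ~~ is_row (w i) := tanner_adj_row (w_adj i).
case: k w k_gt0 edge_inj w_adj alt => [|[|[|[|k]]]] // w _ edge_inj _ alt.
- by have := alt ord0; rewrite (_ : ordS ord0 = ord0) //; [case: is_row | apply: val_inj].
- pose i1 : 'I_2 := @Ordinal 2 1 isT.
  have S0 : ordS ord0 = i1 by apply: val_inj.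
  have S1 : ordS i1 = ord0 by apply: val_inj.
  by have := @edge_inj ord0 i1; rewrite /cyc_edge S0 S1 setUC => /(_ erefl).
- pose i1 : 'I_3 := @Ordinal 3 1 isT; pose i2 : 'I_3 := @Ordinal 3 2 isT.
  have S0 : ordS ord0 = i1 by apply: val_inj.
  have S1 : ordS i1 = i2 by apply: val_inj.
  have S2 : ordS i2 = ord0 by apply: val_inj.
  by have := alt i2; rewrite S2 -S1 alt -S0 alt; case: is_row.
Qed.

Lemma tanner_girth_gt4 : girth_gt e 4 <-> num_cycles e 4 = 0.
Proof.
rewrite /num_cycles; split => [no_short | /eqP].
  apply/eqP; rewrite cards_eq0; apply/eqP/setP => s; rewrite inE.
  by apply/negbTE/imsetP => -[w w_cyc _]; have := no_short _ w w_cyc.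
rewrite cards_eq0 => /eqP no_4cycle k w w_cyc.
have := tanner_cycle_gt3 w_cyc; case: (ltngtP 4 k) => // k4 _; subst k.
by have := in_set0 (cycle_edges w); rewrite -no_4cycle imset_f.
Qed.

Definition rect_edges (r r' : R) (c c' : C) : {set {set R + C}} :=
  quad_edges (inl r) (inr c) (inl r') (inr c').

Definition tanner_rect (r r' : R) (c c' : C) : bool :=
  [&& r != r', c != c' & [&& H r c, H r c', H r' c & H r' c']].

Lemma rect_edges_swap_rows r r' c c' : rect_edges r r' c c' = rect_edges r' r c c'.
Proof. exact: quad_edges_rev. Qed.

Lemma rect_edges_swap_cols r r' c c' : rect_edges r r' c c' = rect_edges r r' c' c.
Proof. by rewrite /rect_edges !(quad_edges_rot (inl r)) quad_edges_rev. Qed.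

Lemma tanner_rect_swap_rows r r' c c' : tanner_rect r r' c c' = tanner_rect r' r c c'.
Proof.
rewrite /tanner_rect eq_sym.
by case: (H r c); case: (H r c'); case: (H r' c); case: (H r' c'); rewrite /= ?andbF.
Qed.

Lemma tanner_rect_swap_cols r r' c c' : tanner_rect r r' c c' = tanner_rect r r' c' c.
Proof.
rewrite /tanner_rect (eq_sym c).
by case: (H r c); case: (H r c'); case: (H r' c); case: (H r' c'); rewrite /= ?andbF.
Qed.

Lemma tanner_4cycleP s :
  reflect (exists r r' c c', tanner_rect r r' c c' /\ s = rect_edges r r' c c')
          (s \in cycle_subgraphs e 4).
Proof.
apply: (iffP imsetP) => [[w w_cyc ->] | [r [r' [c [c' [rect ->]]]]]].
  have [a [b [c [d w_eq]]]] := cycle4_surj w.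
  move: w_cyc; rewrite {}w_eq inE is_cycle4 cycle_edges4.
  case: a b c d => [r1|c1] [r2|c2] [r3|c3] [r4|c4] //=;
    rewrite ?andbF // !inE -!sum_eqE /= !orbF !andbT.
    move=> /and5P[/andP[r13 c24] h12 h32 h34 h14].
    by exists r1, r3, c2, c4; rewrite /tanner_rect r13 c24 h12 h14 h32 h34.
  move=> /and5P[/andP[c13 r24] h21 h23 h43 h41].
  exists r2, r4, c3, c1; rewrite quad_edges_rot.
  by rewrite /tanner_rect r24 eq_sym c13 h21 h23 h43 h41.
exists (cycle4 (inl r) (inr c) (inl r') (inr c')); last by rewrite cycle_edges4.
move: rect; rewrite unfold_in /= is_cycle4 /= !inE -!sum_eqE /= !orbF !andbT.
by case/and3P=> -> -> /and4P[-> -> -> ->].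
Qed.

Lemma rect_edges_inj r1 r2 c1 c2 s1 s2 d1 d2 :
  rect_edges r1 r2 c1 c2 = rect_edges s1 s2 d1 d2 ->
  [set r1; r2] = [set s1; s2] /\ [set c1; c2] = [set d1; d2].
Proof.
have vertices r r' c c' : cover (rect_edges r r' c c') = [set inl r; inl r'; inr c; inr c'].
  apply/setP => z; rewrite /cover /rect_edges /quad_edges !bigcup_setU !big_set1 !inE.
  by case: (z == inl r); case: (z == inl r'); case: (z == inr c); case: (z == inr c');
    rewrite ?orbT.
move=> /(congr1 cover); rewrite !vertices => /setP E.
by split; apply/setP => z; [have := E (inl z) | have := E (inr z)];
  rewrite !inE -!sum_eqE /= ?orbF.
Qed.

End TannerGraph.

Lemma oppr_F2 m n (v : 'M['F_2]_(m, n)) : (- v)%R = v.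
Proof. by apply/matrixP => i j; rewrite mxE oppr_pchar2 // pchar_Fp. Qed.

Lemma addrK_F2 m n (u v : 'M['F_2]_(m, n)) : (u + v + v)%R = u.
Proof. by rewrite -{2}(oppr_F2 v) addrK. Qed.

Section DyadicBlocks.
Variables (l nc nv : nat) (X : 'I_nc -> 'I_nv -> 'rV['F_2]_l).
Local Notation V := 'rV['F_2]_l.
Local Notation H := (block_dyadic X).

Definition dyadic_quads : {set ('I_nc * 'I_nc) * ('I_nv * 'I_nv)} :=
  [set q : ('I_nc * 'I_nc) * ('I_nv * 'I_nv) |
     (q.1.1 < q.1.2) && (q.2 \in collisions (fun u => X q.1.1 u + X q.1.2 u)%R)].

(* Row (h, x) forces columns (u, x + X h u) and (v, x + X h v), and the
   first of these forces the second row (i, x + X h u + X i u). *)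
Definition dyadic_rect (q : ('I_nc * 'I_nc) * ('I_nv * 'I_nv) * V) : {set {set _}} :=
  let: ((h, i), (u, v), x) := q in
  rect_edges (h, x) (i, x + X h u + X i u)%R (u, x + X h u)%R (v, x + X h v)%R.

Lemma tanner_rect_dyadic_blocks h i u v x x' y y' :
  tanner_rect H (h, x) (i, x') (u, y) (v, y') -> h != i /\ u != v.
Proof.
case/and3P => rows cols /and4P[/eqP /= y_x /eqP /= y'_x /eqP /= y_x' _].
split.
  move: rows; apply: contra_neq => eq_hi; subst i; congr (_, _).
  by rewrite -(addrK_F2 x (X h u)) -y_x y_x' addrK_F2.
move: cols; apply: contra_neq => eq_uv; subst v; congr (_, _).
by rewrite y_x y'_x.
Qed.

Lemma tanner_rect_dyadic (h i : 'I_nc) (u v : 'I_nv) (x x' y y' : V) : h < i -> u < v ->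
  tanner_rect H (h, x) (i, x') (u, y) (v, y') ->
  ((h, i), (u, v)) \in dyadic_quads /\
  rect_edges (h, x) (i, x') (u, y) (v, y') = dyadic_rect ((h, i), (u, v), x).
Proof.
move=> lt_hi lt_uv /and3P[_ _ /and4P[/eqP /= y_x /eqP /= y'_x /eqP /= y_x' /eqP /= y'_x']].
have x'_u : x' = (x + X h u + X i u)%R by rewrite -y_x y_x' addrK_F2.
have x'_v : x' = (x + X h v + X i v)%R by rewrite -y'_x y'_x' addrK_F2.
split; last by rewrite /= -x'_u -y_x -y'_x.
rewrite !inE /= lt_hi lt_uv /=; apply/eqP.
by apply: (@addrI _ x); rewrite !addrA -x'_u -x'_v.
Qed.

Lemma dyadic_4cycles :
  cycle_subgraphs (tanner_adj H) 4 = dyadic_rect @: setX dyadic_quads [set: V].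
Proof.
apply/setP => s; apply/tanner_4cycleP/imsetP => [[[h x] [[i x'] [[u y] [[v y'] [rect ->]]]]] |].
  have [hi uv] := tanner_rect_dyadic_blocks rect.
  wlog lt_hi : h i x x' rect hi / h < i.
    move=> gen; case: (ltngtP h i) => [lt | lt | /val_inj eq]; first exact: gen.
      rewrite rect_edges_swap_rows; apply: gen => //; last by rewrite eq_sym.
      by rewrite -tanner_rect_swap_rows.
    by rewrite eq eqxx in hi.
  wlog lt_uv : u v y y' rect uv / u < v.
    move=> gen; case: (ltngtP u v) => [lt | lt | /val_inj eq]; first exact: gen.
      rewrite rect_edges_swap_cols; apply: gen => //; last by rewrite eq_sym.
      by rewrite -tanner_rect_swap_cols.
    by rewrite eq eqxx in uv.
  have [q_in ->] := tanner_rect_dyadic lt_hi lt_uv rect.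
  by exists ((h, i), (u, v), x); rewrite // in_setX q_in in_setT.
case=> [[[[h i] [u v]] x]]; rewrite !inE /= andbT => /andP[lt_hi /andP[lt_uv /eqP coll]] ->.
exists (h, x), (i, x + X h u + X i u)%R, (u, x + X h u)%R, (v, x + X h v)%R; split => //.
have [ne_hi ne_uv] : (h == i) = false /\ (u == v) = false by split; apply: ltn_eqF.
rewrite /tanner_rect /block_dyadic /dyadic_perm /= !xpair_eqE ne_hi ne_uv !eqxx /=.
by rewrite addrK_F2 -(addrA x (X h u)) coll addrA addrK_F2 !eqxx.
Qed.

Lemma dyadic_rect_inj : {in setX dyadic_quads [set: V] &, injective dyadic_rect}.
Proof.
move=> [[[h i] [u v]] x] [[[h' i'] [u' v']] x']; rewrite !inE /= !andbT.
move=> /andP[lt_hi /andP[lt_uv _]] /andP[lt_hi' /andP[lt_uv' _]] /rect_edges_inj[rows cols].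
have [[<- <-] [<- _]] := set2_lt_inj (f := fun r : 'I_nc * V => nat_of_ord r.1) rows lt_hi lt_hi'.
by have [[<- _] [<- _]] := set2_lt_inj (f := fun c : 'I_nv * V => nat_of_ord c.1) cols lt_uv lt_uv'.
Qed.

Lemma card_dyadic_4cycles :
  num_cycles (tanner_adj H) 4 = (2 ^ l * #|dyadic_quads|)%N.
Proof.
rewrite -[num_cycles _ _]/#|cycle_subgraphs _ 4| dyadic_4cycles (card_in_imset dyadic_rect_inj).
by rewrite cardsX cardsT card_mx card_Fp // mul1n mulnC.
Qed.

Lemma card_dyadic_quads : #|dyadic_quads| =
  (\sum_(h < nc) \sum_(i < nc | h < i) #|collisions (fun u => X h u + X i u)%R|)%N.
Proof.
rewrite pair_big_dep /=.
under eq_bigr do rewrite -sum1_card.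
rewrite pair_big_dep /= -sum1_card; apply: eq_bigl => -[[h i] uv].
by rewrite !inE.
Qed.

Lemma dyadic_quads_eq0 :
  dyadic_quads = set0 <-> forall h i : 'I_nc, h < i -> injective (fun u => X h u + X i u)%R.
Proof.
split => [no_quad h i lt_hi | inj]; first apply/collisions_eq0/setP => uv.
  by have := in_set0 ((h, i), uv); rewrite -no_quad inE /= lt_hi in_set0.
apply/setP => -[[h i] uv]; rewrite inE in_set0 /=.
by case: ltnP => //= lt_hi; rewrite (collisions_eq0 _).2 ?in_set0 //; apply: inj.
Qed.

End DyadicBlocks.

Theorem mainTheorem6 (l nc nv : nat) (X : 'I_nc -> 'I_nv -> 'rV['F_2]_l) :
  1 <= l -> 1 <= nc -> 1 <= nv ->
  num_cycles (tanner_adj (block_dyadic X)) 4 =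
    (2 ^ l * \sum_(h < nc) \sum_(i < nc | h < i)
               \sum_(alpha : 'rV['F_2]_l) 'C(rho X h i alpha, 2))%N
  /\
  (girth_gt (tanner_adj (block_dyadic X)) 4 <->
     (forall h i : 'I_nc, h < i -> injective (fun u : 'I_nv => (X h u + X i u)%R))).
Proof.
(* The count holds for all l, nc and nv. *)
move=> _ _ _; split.
  rewrite card_dyadic_4cycles card_dyadic_quads; congr (_ * _)%N.
  by apply: eq_bigr => h _; apply: eq_bigr => i _; apply: card_collisions.
rewrite tanner_girth_gt4 card_dyadic_4cycles -dyadic_quads_eq0.
split => [/eqP | ->]; last by rewrite cards0 muln0.
by rewrite muln_eq0 expn_eq0 /= cards_eq0 => /eqP.
Qed.
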